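(* Let $(S,\cdot)$ be a discrete semigroup, let $\mathcal{F}$ be a filter on $S$ such that $\overline{\mathcal{F}}$ is a subsemigroup of $\beta S$, let $(X,\langle T_s\rangle_{s\in S})$ be a dynamical system, let $L$ be a minimal left ideal of $\overline{\mathcal{F}}$, and let $x\in X$. The following are equivalent: (a) $x$ is an $\mathcal{F}$-uniformly recurrent point of $(X,\langle T_s\rangle_{s\in S})$; (b) there exists $u\in L$ such that $T_u(x)=x$; (c) there exist $y\in X$ and an idempotent $u\in L$ such that $T_u(y)=x$; (d) there exists an idempotent $u\in L$ such that $T_u(x)=x$.
   Context: $\beta S$ is the Stone–Čech compactification of $S$ (ultrafilters on $S$) with the extended operation making it a compact right topological semigroup ($A\in pq$ iff $\{x\in S:x^{-1}A\in q\}\in p$, where $x^{-1}A=\{y: xy\in A\}$). $\overline{\mathcal{F}}=\bigcap_{F\in\mathcal{F}}\overline{F}$ is the set of ultrafilters containing $\mathcal{F}$. A dynamical system $(X,\langle T_s\rangle_{s\in S})$: $X$ compact Hausdorff, each $T_s$ continuous, $T_s\circ T_t=T_{st}$. For $p\in\beta S$, $T_p(x)=p\text{-}\lim_{s\in S}T_s(x)$; one has $T_p\circ T_q=T_{pq}$. A set $A\subseteq S$ is $\mathcal{F}$-syndetic if for every $F\in\mathcal{F}$ there is a finite $G\subseteq F$ with $\bigcup_{t\in G}t^{-1}A\in\mathcal{F}$. A point $x$ is $\mathcal{F}$-uniformly recurrent if for every neighbourhood $U$ of $x$, $\{s\in S:T_s(x)\in U\}$ is $\mathcal{F}$-syndetic.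 *)

From HB Require Import structures.
From mathcomp Require Import all_boot all_order.
From mathcomp Require Import all_classical all_reals all_analysis.
Set Implicit Arguments. Unset Strict Implicit. Unset Printing Implicit Defensive.
Local Open Scope classical_set_scope.

(* Points of beta S are represented as sets of subsets of S (ultrafilters). *)
Section Defs.
Variable S : Type.
Variable op : S -> S -> S.

Definition linv (x : S) (A : set S) : set S := [set y | A (op x y)].

Definition is_filter (F : set (set S)) : Prop :=
  [/\ F setT, ~ F set0,
      (forall A B, F A -> F B -> F (A `&` B)) &
      (forall A B, A `<=` B -> F A -> F B)].

Definition is_ultrafilter (p : set (set S)) : Prop :=
  is_filter p /\ (forall A : set S, p A \/ p (~` A)).

Definition umul (p q : set (set S)) : set (set S) :=
  [set A | p [set x | q (linv x A)]].

Definition Fbar (F : set (set S)) : set (set (set S)) :=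
  [set p | is_ultrafilter p /\ F `<=` p].

Definition is_subsemigroup (M : set (set (set S))) : Prop :=
  forall p q, M p -> M q -> M (umul p q).

Definition is_left_ideal (M L : set (set (set S))) : Prop :=
  L !=set0 /\ L `<=` M /\ (forall p q, M p -> L q -> L (umul p q)).

Definition is_minimal_left_ideal (M L : set (set (set S))) : Prop :=
  is_left_ideal M L /\ (forall L', is_left_ideal M L' -> L' `<=` L -> L' = L).

Definition uidempotent (u : set (set S)) : Prop := umul u u = u.

Definition F_syndetic (F : set (set S)) (A : set S) : Prop :=
  forall B, F B -> exists G : set S,
    [/\ finite_set G, G `<=` B & F (\bigcup_(t in G) linv t A)].
End Defs.

Section Dyn.
Variables (S : Type) (op : S -> S -> S) (X : topologicalType).

Definition dynamical_system (T : S -> X -> X) : Prop :=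
  [/\ compact [set: X], hausdorff_space X,
      (forall s, continuous (T s)) &
      (forall s t, T s \o T t = T (op s t))].

(* "p-lim_{s in S} f s = y" : every neighbourhood of y has its preimage in p.
   In a Hausdorff space this limit, when it exists, is unique; thus
   T_p(x) = y is expressed as plim_is p (fun s => T s x) y. *)
Definition plim_is (p : set (set S)) (f : S -> X) (y : X) : Prop :=
  forall U, nbhs y U -> p (f @^-1` U).

Definition F_uniformly_recurrent (F : set (set S)) (T : S -> X -> X) (x : X) : Prop :=
  forall U, nbhs x U -> F_syndetic op F [set s | U (T s x)].
End Dyn.

From HB Require Import structures.
From mathcomp Require Import all_boot all_order.
From mathcomp Require Import all_classical all_reals all_analysis.
From mathcomp Require Import finmap.
Local Open Scope classical_set_scope.

(* Closed subsets of beta S are described by the filters their members share, and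
   compactness of beta S becomes the extension of filter bases to ultrafilters.  Three
   facts drive the equivalences: A is F-syndetic iff every B in F and p in Fbar F give
   some t in B with t^-1 A in p; every q in the minimal left ideal L satisfies
   L = Fbar F q; and T_p (T_q y) = T_(pq) y.
   (a) -> (b): for p in L, the filter F together with the sets {t | t^-1 A_U in p},
   A_U = {s | T_s x in U}, extends to some r in Fbar F, and then T_(rp) x = x.
   (b) -> (a): writing u = r p u with r in Fbar F gives T_(rp) x = T_u x = x.
   (b) -> (d): the Ellis-Numakura lemma gives an idempotent e in the closed subsemigroup
   {v in L | v u = u}, and T_e x = T_(eu) x = x.  (c) -> (d): T_u x = T_(uu) y = x. *)

Section Ultrafilters.
Context {S : Type}.
Implicit Types (F p q : set (set S)) (A : set S).

Lemma is_filter_proper {F} : is_filter F -> ProperFilter F.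
Proof. by case=> FT F0 FI FS; split=> //; split. Qed.

Lemma ultra_proper {p} : is_ultrafilter p -> ProperFilter p.
Proof. by case=> /is_filter_proper. Qed.

Lemma ultra_setC {p A} : is_ultrafilter p -> p (~` A) <-> ~ p A.
Proof.
move=> pU; have pF := ultra_proper pU; split; last by case: (proj2 pU A).
by move=> pnA pA; apply: (filter_not_empty p); rewrite -(setICr A); apply: filterI.
Qed.

Lemma ultra_subset_eq p q : is_ultrafilter p -> is_ultrafilter q -> p `<=` q -> p = q.
Proof.
move=> pU qU pq; apply/seteqP; split=> // A qA; apply: contrapT.
by move=> /(ultra_setC pU)/pq/(ultra_setC qU).
Qed.

Lemma UltraFilter_ultra p : UltraFilter p -> is_ultrafilter p.
Proof.
move=> pU; split; last by move=> A; apply: in_ultra_setVsetC.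
split=> [| |A B|A B];
  [apply: filterT|apply: filter_not_empty|apply: filterI|apply: filterS].
Qed.

Lemma ultrafilter_from {I : Type} (D : set I) (B : I -> set S) :
  (exists i, D i) ->
  (forall i j, D i -> D j -> exists2 k, D k & B k `<=` B i `&` B j) ->
  (forall i, D i -> B i !=set0) ->
  exists2 p, is_ultrafilter p & forall i, D i -> p (B i).
Proof.
move=> D0 Ddir BN0; have BF := filter_from_filter D0 Ddir.
have [p [pU Bp]] := ultraFilterLemma (filter_from_proper BF BN0).
by exists p => [|i Di]; [apply: UltraFilter_ultra | apply: Bp; exists i].
Qed.

Lemma ultra_bigcup {p} {G : set S} {f : S -> set S} : is_ultrafilter p ->
  finite_set G -> p (\bigcup_(t in G) f t) -> exists2 t, G t & p (f t).
Proof.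
move=> pU /(@finite_fsetP {classic S}) [D ->] pG; have pF := ultra_proper pU.
apply: contrapT => nf.
have : p (\bigcap_(t in [set` D]) ~` f t).
  by apply: filter_bigI => t tD; apply/(ultra_setC pU) => ft; apply: nf; exists t.
by move=> /(filterI pG)/filter_ex [y [[t tD fty] /(_ t tD)]].
Qed.

End Ultrafilters.

Section BetaClosed.
Context {S : Type}.
Implicit Types (F p q : set (set S)) (K : set (set (set S))).

(* [common K] is the filter of the sets lying in every member of K; the ultrafilters
   containing it form the closure of K in beta S, so [beta_closed K] says K is closed. *)
Definition common K : set (set S) := [set A | forall p, K p -> p A].

Definition beta_closed K :=
  forall q, is_ultrafilter q -> common K `<=` q -> K q.

Lemma common_Filter {K} : K `<=` @is_ultrafilter S -> Filter (common K).
Proof.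
move=> KU; split=> [p /KU/ultra_proper pF|A B KA KB p Kp|A B AB KA p Kp].
- exact: filterT.
- by have pF := ultra_proper (KU _ Kp); apply: filterI; [apply: KA|apply: KB].
- by have pF := ultra_proper (KU _ Kp); apply: filterS AB (KA _ Kp).
Qed.

Lemma common_subset {K1 K2} : K1 `<=` K2 -> common K2 `<=` common K1.
Proof. by move=> K12 A K2A p /K12; apply: K2A. Qed.

Lemma beta_closedI K1 K2 :
  beta_closed K1 -> beta_closed K2 -> beta_closed (K1 `&` K2).
Proof.
move=> K1cl K2cl q qU qK; split; [apply: K1cl|apply: K2cl] => //;
  by apply: subset_trans qK; apply: common_subset => p [].
Qed.

Lemma beta_closed_Fbar F : beta_closed (Fbar F).
Proof. by move=> q qU qF; split=> // A FA; apply: qF => p [_]; apply. Qed.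

Lemma bigcap_chain_neq0 (C : set (set (set (set S)))) :
  C !=set0 -> total_on C subset ->
  (forall K, C K -> [/\ K `<=` @is_ultrafilter S, K !=set0 & beta_closed K]) ->
  \bigcap_(K in C) K !=set0.
Proof.
move=> [K0 CK0] Ctot cC.
have [|X Y [KX CKX KXX] [KY CKY KYY]|X [K CK KX]|q qU qC] :=
  @ultrafilter_from _ _ (\bigcup_(K in C) common K) id.
- have [K0U _ _] := cC _ CK0; have K0F := common_Filter K0U.
  by exists setT, K0 => //; apply: filterT.
- exists (X `&` Y) => [|//]; have [KXY|KYX] := Ctot _ _ CKX CKY.
  + have [KXU _ _] := cC _ CKX; have KXF := common_Filter KXU.
    by exists KX => //; apply: filterI KXX (common_subset KXY _ KYY).
  + have [KYU _ _] := cC _ CKY; have KYF := common_Filter KYU.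
    by exists KY => //; apply: filterI (common_subset KYX _ KXX) KYY.
- have [KU [p Kp] _] := cC _ CK; have pF := ultra_proper (KU _ Kp).
  exact: filter_ex (KX _ Kp).
- exists q => K CK; have [_ _ Kcl] := cC _ CK.
  by apply: Kcl => // A KA; apply: qC; exists K.
Qed.

End BetaClosed.

Section Product.
Context {S : Type} {op : S -> S -> S}.
Hypothesis opA : associative op.
Implicit Types (p q r : set (set S)) (K M : set (set (set S))).

Lemma linvM s t A : linv op t (linv op s A) = linv op (op s t) A.
Proof. by rewrite /linv; apply/seteqP; split=> y /=; rewrite opA. Qed.

Lemma umulA : associative (umul op).
Proof.
move=> p q r; apply/funext => A /=; congr p; apply/funext => x /=.
by congr q; apply/funext => y /=; rewrite linvM.
Qed.

Lemma umul_ultra {p q} :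
  is_ultrafilter p -> is_ultrafilter q -> is_ultrafilter (umul op p q).
Proof.
move=> pU qU; have pF := ultra_proper pU; have qF := ultra_proper qU.
rewrite /umul; split; first split=> /=.
- by apply: filterS filterT => x _; apply: filterS filterT.
- move=> p0; apply: (filter_not_empty p); apply: filterS p0 => x /= /filter_ex [y []].
- move=> A B pA pB; apply: filterS (filterI pA pB) => x [/= qA qB].
  exact: filterI qA qB.
- by move=> A B AB pA; apply: filterS pA => x /=; apply: filterS => y /AB.
move=> A; case: (proj2 pU [set x | q (linv op x A)]) => pA; [by left|right].
by apply: filterS pA => x /= /(ultra_setC qU).
Qed.

Lemma umul_ultra_from (B A : set (set S)) p {BF : Filter B} {AF : Filter A} :
  is_ultrafilter p ->
  (forall Bs As, B Bs -> A As -> exists2 t, Bs t & p (linv op t As)) ->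
  exists2 r, is_ultrafilter r & B `<=` r /\ A `<=` umul op r p.
Proof.
move=> pU BA; have pF := ultra_proper pU.
have [|i j [Bi Ai] [Bj Aj]|i [Bi Ai]|r rU rBA] :=
  @ultrafilter_from _ _ [set i | B i.1 /\ A i.2]
    (fun i => i.1 `&` [set t | p (linv op t i.2)]).
- by exists (setT, setT); split; apply: filterT.
- exists (i.1 `&` j.1, i.2 `&` j.2); first by split; apply: filterI.
  by move=> t [[it jt] /= pt]; split; split=> //; apply: filterS pt => s [].
- by have [t] := BA _ _ Bi Ai; exists t.
- have rF := ultra_proper rU; exists r => //; split=> [Bs BBs|As AAs].
  + by apply: filterS (rBA (Bs, setT) _) => [t [] //|/=]; split=> //; apply: filterT.
  + by apply: filterS (rBA (setT, As) _) => [t [_] //|/=]; split=> //; apply: filterT.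
Qed.

Lemma beta_closed_umulr K e : K `<=` @is_ultrafilter S -> beta_closed K ->
  is_ultrafilter e -> beta_closed [set umul op r e | r in K].
Proof.
move=> KU Kcl eU q qU qKe; have KF := common_Filter KU; have qF := ultra_proper qU.
have [Bs As KBs qAs|r rU [Kr qre]] := umul_ultra_from (common K) q e eU.
  apply: contrapT => nt.
  suff /qKe : common [set umul op r e | r in K] (~` As) by move/(ultra_setC qU).
  move=> _ [r Kr <-]; have rF := ultra_proper (KU _ Kr).
  apply: filterS (KBs _ Kr) => t Bst; apply/(ultra_setC eU) => etA.
  by apply: nt; exists t.
exists r; first exact: Kcl.
by apply/esym/ultra_subset_eq => //; apply: umul_ultra.
Qed.

Lemma beta_closed_stab e : is_ultrafilter e ->
  beta_closed [set v | is_ultrafilter v /\ umul op v e = e].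
Proof.
move=> eU q qU qK; split=> //; apply/esym/ultra_subset_eq => //.
  exact: umul_ultra.
by move=> A eA; apply: qK => v [_ ve]; rewrite -ve in eA.
Qed.

Definition closed_subsemigroup K :=
  [/\ K `<=` @is_ultrafilter S, K !=set0, beta_closed K & is_subsemigroup op K].

Lemma closed_subsemigroup_bigcap (C : set (set (set (set S)))) :
  C !=set0 -> total_on C subset -> (forall M, C M -> closed_subsemigroup M) ->
  closed_subsemigroup (\bigcap_(M in C) M).
Proof.
move=> [M0 CM0] Ctot cC; split.
- by move=> p /(_ M0 CM0); have [+ _ _ _] := cC M0 CM0; apply.
- by apply: bigcap_chain_neq0 => // [|M /cC[]]; [exists M0|].
- move=> q qU qC M CM; have [_ _ Mcl _] := cC M CM; apply: Mcl => //.
  by apply: subset_trans qC; apply: common_subset => p; apply.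
- move=> p q pC qC M CM; have [_ _ _ Msemi] := cC M CM.
  exact: Msemi (pC M CM) (qC M CM).
Qed.

Lemma minimal_closed_subsemigroup K : closed_subsemigroup K ->
  exists M, [/\ M `<=` K, closed_subsemigroup M &
    forall M', closed_subsemigroup M' -> M' `<=` M -> M' = M].
Proof.
move=> cK; pose sub := {M | M `<=` K /\ closed_subsemigroup M}.
pose R (M1 M2 : sub) := `[< sval M2 `<=` sval M1 >].
have Rrefl (M : sub) : R M M by apply/asboolP.
have Rtrans (M1 M2 M3 : sub) : R M1 M2 -> R M2 M3 -> R M1 M3.
  by move=> /asboolP M21 /asboolP M32; apply/asboolP; apply: subset_trans M21.
have Ranti (M1 M2 : sub) : R M1 M2 -> R M2 M1 -> M1 = M2.
  by case: M1 M2 => [M1 ?] [M2 ?] /asboolP ? /asboolP ?; apply: eq_exist; apply/seteqP.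
have Rchain (C : set sub) : total_on C R -> exists M : sub, forall c, C c -> R c M.
  move=> Ctot; pose C' := K |` [set sval c | c in C].
  have cC' : closed_subsemigroup (\bigcap_(M in C') M).
    apply: closed_subsemigroup_bigcap => [|M1 M2|M]; first by exists K; left.
      case=> [->|[c1 Cc1 <-]] [->|[c2 Cc2 <-]].
      - by left.
      - by right; case: (svalP c2).
      - by left; case: (svalP c1).
      - by have [/asboolP|/asboolP] := Ctot _ _ Cc1 Cc2; [right|left].
    by case=> [->|[c _ <-]] //; case: (svalP c).
  have C'K : \bigcap_(M in C') M `<=` K by move=> p; apply; left.
  exists (exist _ (\bigcap_(M in C') M) (conj C'K cC')) => c Cc.
  by apply/asboolP => p /=; apply; right; exists c.
have [[M [MK cM]] Mmin] := Zorn Rrefl Rtrans Ranti Rchain.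
exists M; split=> // M' cM' M'M.
have M'E : exist _ M' (conj (subset_trans M'M MK) cM') = exist _ M (conj MK cM) :> sub.
  by apply: Mmin; apply/asboolP.
exact: (congr1 (@sval _ _) M'E).
Qed.

Lemma closed_subsemigroup_idempotent K :
  closed_subsemigroup K -> exists2 e, K e & uidempotent op e.
Proof.
move=> /minimal_closed_subsemigroup [M [MK [MU [e Me] Mcl Msemi] Mmin]].
have eU := MU _ Me.
have MeE : [set umul op r e | r in M] = M.
  apply: (Mmin); last by move=> _ [r Mr <-]; apply: Msemi.
  split; first by move=> _ [r /MU rU <-]; apply: umul_ultra.
  - by exists (umul op e e), e.
  - exact: beta_closed_umulr.
  move=> _ _ [r1 Mr1 <-] [r2 Mr2 <-]; exists (umul op (umul op r1 e) r2).
    exact: Msemi (Msemi _ _ Mr1 Me) Mr2.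
  by rewrite umulA.
have [r Mr ree] : [set umul op r e | r in M] e by rewrite MeE.
have MstabE : M `&` [set v | is_ultrafilter v /\ umul op v e = e] = M.
  apply: Mmin; last by move=> v [].
  split; first by move=> v [_ []].
  - by exists r; split=> //; split; [apply: MU|].
  - exact: beta_closedI Mcl (beta_closed_stab _ eU).
  move=> v1 v2 [Mv1 [v1U v1e]] [Mv2 [v2U v2e]]; split; first exact: Msemi.
  by split; [apply: umul_ultra|rewrite -umulA v2e v1e].
have [_ [_ ee]] : (M `&` [set v | is_ultrafilter v /\ umul op v e = e]) e.
  by rewrite MstabE.
by exists e; [apply: MK|].
Qed.

Lemma minimal_left_ideal_umulr {M L K q} :
  is_subsemigroup op M -> is_minimal_left_ideal op M L -> is_left_ideal op M K ->
  L q -> L = [set umul op r q | r in K].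
Proof.
move=> Msemi [[_ [LM Lmul]] Lmin] [[r0 Kr0] [KM Kmul]] Lq; apply/esym/Lmin.
  split; first by exists (umul op r0 q), r0.
  split; first by move=> _ [r Kr <-]; apply: Msemi (KM _ Kr) (LM _ Lq).
  move=> p _ Mp [r Kr <-]; exists (umul op p r); first exact: Kmul.
  by rewrite umulA.
by move=> _ [r Kr <-]; apply: Lmul (KM _ Kr) Lq.
Qed.

End Product.

Section Plim.
Context {S : Type} {X : topologicalType}.
Implicit Types (p q : set (set S)) (f : S -> X).

Lemma plim_exists p f : is_ultrafilter p -> compact [set: X] -> exists y, plim_is p f y.
Proof.
move=> pU cX; have pF := ultra_proper pU.
have [y [_ fpy]] := cX (fmap f p) (fmap_proper_filter f pF) filterT.
exists y => U yU; apply: contrapT => /(ultra_setC pU) pnU.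
by have [z []] := fpy (~` U) U pnU yU.
Qed.

Lemma plim_unique {p f y z} : is_ultrafilter p -> hausdorff_space X ->
  plim_is p f y -> plim_is p f z -> y = z.
Proof.
move=> pU hX py pz; have pF := ultra_proper pU; apply: hX => A B yA zB.
by have [s [As Bs]] := filter_ex (filterI (py _ yA) (pz _ zB)); exists (f s).
Qed.

Context {op : S -> S -> S} {T : S -> X -> X}.
Hypotheses (T_cont : forall s, continuous (T s))
  (T_op : forall s t, T s \o T t = T (op s t)).

Lemma plim_act {p x z t} : is_ultrafilter p ->
  plim_is p (fun s => T s x) z -> plim_is p (fun s => T (op t s) x) (T t z).
Proof.
move=> pU pz U tzU; have pF := ultra_proper pU.
by apply: filterS (pz _ (T_cont t z U tzU)) => s /=; rewrite -T_op.
Qed.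

Lemma plim_umul {p q x z w} : is_ultrafilter p -> is_ultrafilter q ->
  plim_is q (fun s => T s x) z -> plim_is p (fun s => T s z) w ->
  plim_is (umul op p q) (fun s => T s x) w.
Proof.
move=> pU qU qz pw U wU; have pF := ultra_proper pU.
apply: filterS (pw _ (nbhs_interior wU)) => t /= tzU.
exact: plim_act qU qz _ tzU.
Qed.

Lemma plim_fixed_umul {p q x y} : compact [set: X] -> hausdorff_space X ->
  is_ultrafilter p -> is_ultrafilter q -> umul op p q = q ->
  plim_is q (fun s => T s y) x -> plim_is p (fun s => T s x) x.
Proof.
move=> cX hX pU qU pqq qx; have [w pw] := plim_exists p (fun s => T s x) pU cX.
have := plim_umul pU qU qx pw; rewrite pqq => qw.
by rewrite (plim_unique qU hX qw qx) in pw.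
Qed.

End Plim.

Lemma F_syndeticP {S : Type} {op : S -> S -> S} {F : set (set S)} {A : set S} :
  is_filter F -> F_syndetic op F A <->
  (forall B p, F B -> Fbar F p -> exists2 t, B t & p (linv op t A)).
Proof.
move=> hF; have FF := is_filter_proper hF.
split=> [Asyn B p FB [pU Fp]|Aret B FB].
  have [G [Gfin GB FG]] := Asyn B FB.
  by have [t Gt ptA] := ultra_bigcup pU Gfin (Fp _ FG); exists t; [apply: GB|].
apply: contrapT => Anot.
have [|i j [Fi Gi GBi] [Fj Gj GBj]|i [Fi Gi GBi]|p pU pD] :=
  @ultrafilter_from _ _ [set i | [/\ F i.1, finite_set i.2 & i.2 `<=` B]]
    (fun i => i.1 `&` ~` \bigcup_(t in i.2) linv op t A).
- by exists (setT, set0); split; [apply: filterT|apply: finite_set0|].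
- exists (i.1 `&` j.1, i.2 `|` j.2).
    by split; [apply: filterI|rewrite finite_setU|move=> t [/GBi|/GBj]].
  by rewrite /= bigcup_setU setCU => y [[iy jy] [niy njy]]; split; split.
- apply: contrapT => nA; apply: Anot; exists i.2; split=> //.
  by apply: filterS Fi => y iy; apply: contrapT => nAy; apply: nA; exists y.
have pF := ultra_proper pU.
have Fp : Fbar F p.
  split=> // C FC; apply: filterS (pD (C, set0) _) => [y []//|].
  by split=> //; apply: finite_set0.
have [t Bt ptA] := Aret B p FB Fp.
have pDt : p (setT `&` ~` \bigcup_(s in [set t]) linv op s A).
  by apply: (pD (setT, [set t])); split; [apply: filterT|apply: finite_set1|move=> _ ->].
have [y [[_ nA] ytA]] := filter_ex (filterI pDt ptA).
by apply: nA; exists t.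
Qed.

Section Recurrence.
Context {S : Type} {op : S -> S -> S} {F : set (set S)}.
Hypotheses (opA : associative op) (hF : is_filter F)
  (Fsemi : is_subsemigroup op (Fbar F)).
Context {L : set (set (set S))} {X : topologicalType} {T : S -> X -> X}.
Hypotheses (hL : is_minimal_left_ideal op (Fbar F) L)
  (hT : dynamical_system op T).

Lemma minimal_left_ideal_ultra {u} : L u -> is_ultrafilter u.
Proof. by have [[_ [LF _]] _] := hL; move=> /LF []. Qed.

Lemma Fbar_left_ideal : is_left_ideal op (Fbar F) (Fbar F).
Proof.
have [[[p Lp] [LF _]] _] := hL.
by split; [exists p; apply: LF|split; [move=> ?|exact: Fsemi]].
Qed.

Lemma minimal_left_ideal_closed : beta_closed L.
Proof.
have [[[u Lu] _] _] := hL.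
rewrite (minimal_left_ideal_umulr opA Fsemi hL Fbar_left_ideal Lu).
apply: beta_closed_umulr; [by move=> p []|exact: beta_closed_Fbar|].
exact: minimal_left_ideal_ultra.
Qed.

Lemma uniformly_recurrent_plim {x} : F_uniformly_recurrent op F T x ->
  exists u, L u /\ plim_is u (fun s => T s x) x.
Proof.
move=> xrec; have [[[p Lp] [LF Lmul]] _] := hL.
have pU := minimal_left_ideal_ultra Lp; have pF := ultra_proper pU.
have FF := is_filter_proper hF.
pose N := filter_from (nbhs x) (fun U => [set s | U (T s x)]).
have NF : Filter N.
  apply: filter_from_filter; first by exists setT; apply: filterT.
  by move=> U V xU xV; exists (U `&` V); [apply: filterI|].
have [B As FB [U xU UAs]|r rU [Fr Nrp]] := umul_ultra_from (op := op) F N p pU.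
  have [t Bt ptU] := (F_syndeticP hF).1 (xrec U xU) B p FB (LF _ Lp).
  by exists t => //; apply: filterS ptU => s /UAs.
exists (umul op r p); split; first exact: Lmul.
by move=> U xU; apply: Nrp; exists U.
Qed.

Lemma plim_uniformly_recurrent {x} :
  (exists u, L u /\ plim_is u (fun s => T s x) x) -> F_uniformly_recurrent op F T x.
Proof.
move=> [u [Lu ux]] U xU; have [cX hX T_cont T_op] := hT; have [[_ [LF Lmul]] _] := hL.
apply/F_syndeticP => // B p FB Fp; have [pU _] := Fp.
have uU := minimal_left_ideal_ultra Lu.
have [r [rU Fr] rpu] : [set umul op r (umul op p u) | r in Fbar F] u.
  by rewrite -(minimal_left_ideal_umulr opA Fsemi hL Fbar_left_ideal (Lmul _ _ Fp Lu)).
have rpuu : umul op (umul op r p) u = u by rewrite -(umulA opA).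
have rpx := plim_fixed_umul T_cont T_op cX hX (umul_ultra rU pU) uU rpuu ux.
have rF := ultra_proper rU.
by have [t [Bt ptU]] := filter_ex (filterI (Fr _ FB) (rpx U xU)); exists t.
Qed.

Lemma plim_idempotent {x} : (exists u, L u /\ plim_is u (fun s => T s x) x) ->
  exists u, [/\ L u, uidempotent op u & plim_is u (fun s => T s x) x].
Proof.
move=> [u [Lu ux]]; have [cX hX T_cont T_op] := hT; have [[_ [LF Lmul]] _] := hL.
have uU := minimal_left_ideal_ultra Lu.
have [e [Le [eU eu]] ee] :
    exists2 e, (L `&` [set v | is_ultrafilter v /\ umul op v u = u]) e
      & uidempotent op e.
  apply: (closed_subsemigroup_idempotent opA); split.
  - by move=> v [_ []].
  - have [v Lv vu] : [set umul op v u | v in L] u.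
      by rewrite -(minimal_left_ideal_umulr opA Fsemi hL hL.1 Lu).
    by exists v; split=> //; split=> //; apply: minimal_left_ideal_ultra.
  - exact: beta_closedI minimal_left_ideal_closed (beta_closed_stab _ uU).
  move=> v w [Lv [vU vu]] [Lw [wU wu]]; split; first exact: Lmul (LF _ Lv) Lw.
  by split; [apply: umul_ultra|rewrite -(umulA opA) wu vu].
by exists e; split=> //; exact (plim_fixed_umul T_cont T_op cX hX eU uU eu ux).
Qed.

Lemma idempotent_plim_fixed {x y u} : L u -> uidempotent op u ->
  plim_is u (fun s => T s y) x -> plim_is u (fun s => T s x) x.
Proof.
move=> Lu uu; have [cX hX T_cont T_op] := hT; have uU := minimal_left_ideal_ultra Lu.
exact (plim_fixed_umul T_cont T_op cX hX uU uU uu).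
Qed.

End Recurrence.

Theorem theorem11 (S : Type) (op : S -> S -> S)
  (op_assoc : forall a b c, op a (op b c) = op (op a b) c)
  (F : set (set S)) (hF : is_filter F)
  (hFsemi : is_subsemigroup op (Fbar F))
  (X : topologicalType) (T : S -> X -> X) (hT : dynamical_system op T)
  (L : set (set (set S))) (hL : is_minimal_left_ideal op (Fbar F) L)
  (x : X) :
  [/\ (F_uniformly_recurrent op F T x <->
        exists u, L u /\ plim_is u (fun s => T s x) x),
      ((exists u, L u /\ plim_is u (fun s => T s x) x) <->
        exists (y : X) u, [/\ L u, uidempotent op u & plim_is u (fun s => T s y) x]) &
      ((exists (y : X) u, [/\ L u, uidempotent op u & plim_is u (fun s => T s y) x]) <->
        exists u, [/\ L u, uidempotent op u & plim_is u (fun s => T s x) x])].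
Proof.
have c_to_d : (exists y u, [/\ L u, uidempotent op u & plim_is u (fun s => T s y) x]) ->
    exists u, [/\ L u, uidempotent op u & plim_is u (fun s => T s x) x].
  move=> [y [u [Lu uu uyx]]]; exists u; split=> //.
  exact (idempotent_plim_fixed hL hT Lu uu uyx).
split; split.
- exact (uniformly_recurrent_plim hF hL).
- exact (plim_uniformly_recurrent op_assoc hF hFsemi hL hT).
- by move=> /(plim_idempotent op_assoc hFsemi hL hT) [u [Lu uu ux]]; exists x, u.
- by move=> /c_to_d [u [Lu _ ux]]; exists u.
- exact: c_to_d.
- by move=> [u [Lu uu ux]]; exists x, u.
Qed.
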